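(* Let $Z$ and $X$ be the third and first Pauli matrices on $\mathbb C^2$ and consider the assemblage, for $a,b,x,y\in\{0,1\}$, $$\sigma^{(\mathrm{GHZ})}_{a,b|x,y}=\frac18\left\{\mathbb 1+\frac{(-1)^b}{\sqrt2}\left[Z+x(-1)^{a+y}X\right]\right\}$$ (obtained from the state $(|000\rangle+|111\rangle)/\sqrt2$ when Bob measures in the eigenbasis of $Z+X$ for $y=0$ and of $Z-X$ for $y=1$, and Alice performs the trivial POVM $\{\mathbb 1/2,\mathbb 1/2\}$ for $x=0$ and an $X$-basis measurement for $x=1$). Then $\sigma^{(\mathrm{GHZ})}$ admits an LHS model across $AB|C$, and under the wiring $y=a$ it is mapped to the bipartite assemblage $$\sigma_{b|x}=\sum_a\sigma^{(\mathrm{GHZ})}_{a,b|x,a}=\frac14\left[\mathbb 1+\frac{(-1)^b}{\sqrt2}(Z+xX)\right],\qquad b,x\in\{0,1\},$$ which is both steerable and Bell nonlocal.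
   Context: A tripartite family $\{\sigma_{a,b|x,y}\}$ of positive semidefinite operators on $\mathbb C^2$ admits an LHS model across $AB|C$ if there exist a finite set of $\lambda$, probabilities $P_\lambda$, arbitrary conditional probability distributions $P_{a,b|x,y,\lambda}$ (not required to be non-signaling), and density operators $\varrho_\lambda$ with $\sigma_{a,b|x,y}=\sum_\lambda P_\lambda P_{a,b|x,y,\lambda}\varrho_\lambda$. A bipartite assemblage $\{\sigma_{b|x}\}$ is unsteerable if $\sigma_{b|x}=\sum_\lambda P_\lambda P_{b|x,\lambda}\varrho_\lambda$ for some finite hidden variable $\lambda$, probabilities $P_\lambda$, conditional distributions $P_{b|x,\lambda}$ and density operators $\varrho_\lambda$; otherwise it is steerable. It is Bell nonlocal if there exist POVMs $\{M_{c|z}\}_c$ on Charlie's system, for finitely many inputs $z$, such that the behavior $P(b,c|x,z)=\mathrm{Tr}[M_{c|z}\sigma_{b|x}]$ admits no local hidden-variable model $P(b,c|x,z)=\sum_\lambda P_\lambda P(b|x,\lambda)P(c|z,\lambda)$. *)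

From HB Require Import structures.
From mathcomp Require Import all_boot all_order all_algebra.
From mathcomp Require Import complex reals.
Set Implicit Arguments. Unset Strict Implicit. Unset Printing Implicit Defensive.
Import Order.TTheory GRing.Theory Num.Theory.
Local Open Scope ring_scope.

Section Defs.
Variable R : realType.
Local Notation C := R[i].

Definition rc (x : R) : C := (x%:C)%C.

Definition adj m n (A : 'M[C]_(m, n)) : 'M[C]_(n, m) := map_mx Num.conj A^T.

Definition psd (A : 'M[C]_2) : Prop :=
  A = adj A /\ forall v : 'cV[C]_2, 0 <= (adj v *m A *m v) 0 0.

Definition density (rho : 'M[C]_2) : Prop := psd rho /\ \tr rho = 1.

Definition pauliX : 'M[C]_2 := \matrix_(i, j) (if i == j then 0 else 1).
Definition pauliZ : 'M[C]_2 :=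
  \matrix_(i, j) (if i == j then (if i == ord0 then 1 else -1) else 0).

Definition prob_dist (T : finType) (P : T -> R) : Prop :=
  (forall t, 0 <= P t) /\ \sum_t P t = 1.

(* tripartite assemblage sigma a b x y, LHS model across AB|C:
   finitely many hidden variables lambda, arbitrary (possibly signaling)
   conditional distributions P(a,b|x,y,lambda). *)
Definition LHS_AB_C (A B X Y : finType) (sigma : A -> B -> X -> Y -> 'M[C]_2)
  : Prop :=
  exists (n : nat) (P : 'I_n -> R) (Pab : 'I_n -> X -> Y -> A * B -> R)
         (rho : 'I_n -> 'M[C]_2),
    prob_dist P /\
    (forall l x y, prob_dist (Pab l x y)) /\
    (forall l, density (rho l)) /\
    forall a b x y,
      sigma a b x y = \sum_(l < n) rc (P l * Pab l x y (a, b)) *: rho l.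

Definition unsteerable (B X : finType) (sigma : B -> X -> 'M[C]_2) : Prop :=
  exists (n : nat) (P : 'I_n -> R) (Pb : 'I_n -> X -> B -> R)
         (rho : 'I_n -> 'M[C]_2),
    prob_dist P /\
    (forall l x, prob_dist (Pb l x)) /\
    (forall l, density (rho l)) /\
    forall b x, sigma b x = \sum_(l < n) rc (P l * Pb l x b) *: rho l.

Definition steerable (B X : finType) (sigma : B -> X -> 'M[C]_2) : Prop :=
  ~ unsteerable sigma.

Definition LHV (B X Cc Z : finType) (P : B -> Cc -> X -> Z -> R) : Prop :=
  exists (n : nat) (Pl : 'I_n -> R) (Pb : 'I_n -> X -> B -> R)
         (Pc : 'I_n -> Z -> Cc -> R),
    prob_dist Pl /\
    (forall l x, prob_dist (Pb l x)) /\
    (forall l z, prob_dist (Pc l z)) /\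
    forall b c x z, P b c x z = \sum_(l < n) Pl l * Pb l x b * Pc l z c.

Definition POVM (Cc Z : finType) (M : Cc -> Z -> 'M[C]_2) : Prop :=
  (forall c z, psd (M c z)) /\ (forall z, \sum_c M c z = 1).

Definition bell_nonlocal (B X : finType) (sigma : B -> X -> 'M[C]_2) : Prop :=
  exists (k m : nat) (M : 'I_k -> 'I_m -> 'M[C]_2),
    POVM M /\
    forall P : B -> 'I_k -> X -> 'I_m -> R,
      (forall b c x z, rc (P b c x z) = \tr (M c z *m sigma b x)) ->
      ~ LHV P.

Definition sigmaGHZ (a b x y : 'I_2) : 'M[C]_2 :=
  rc (1 / 8) *: (1%:M + (rc ((-1) ^+ b / Num.sqrt 2)) *:
     (pauliZ + rc ((x : nat)%:R * (-1) ^+ (a + y)) *: pauliX)).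

Definition wired (b x : 'I_2) : 'M[C]_2 := \sum_(a < 2) sigmaGHZ a b x a.

End Defs.

From mathcomp Require Import all_boot all_order all_algebra.
From mathcomp Require Import complex reals.
From mathcomp Require Import ring lra.
Set Implicit Arguments. Unset Strict Implicit. Unset Printing Implicit Defensive.
Import Order.TTheory GRing.Theory Num.Theory.
Local Open Scope ring_scope.

(* LHS model: four hidden qubit states of weight 1/4, with Bloch vectors
   [((-1)^β, (-1)^γ) / sqrt 2] in the Z-X plane; Bob answers [b = β], and
   Alice answers at random for [x = 0] and with the bit making
   [a + y + b = γ (mod 2)] for [x = 1].
   Under the wiring [y = a], Charlie measuring [Z] and [-X] yields the CHSH
   value [3 / sqrt 2 > 2], so the wired assemblage is Bell nonlocal.  Bell
   nonlocality implies steerability: measuring an unsteerable assemblage gives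
   a local behaviour whose response for Charlie is [tr (M_c ρ_λ)], a
   probability distribution because a positive operator has nonnegative trace
   against a state. *)

Lemma big_ord2 (V : nmodType) (F : 'I_2 -> V) : \sum_i F i = F 0 + F 1.
Proof. by rewrite !big_ord_recl big_ord0 addr0; congr (F _ + F _); apply: val_inj. Qed.

Lemma mxtrace2 (V : nmodType) (A : 'M[V]_2) : \tr A = A 0 0 + A 1 1.
Proof. exact: big_ord2. Qed.

Lemma mulmx2E (S : pzSemiRingType) m n (A : 'M[S]_(m, 2)) (B : 'M[S]_(2, n)) i j :
  (A *m B) i j = A i 0 * B 0 j + A i 1 * B 1 j.
Proof. by rewrite mxE big_ord2. Qed.

Section QubitOperators.
Variable R : realType.
Local Notation C := R[i].
Local Notation "z ^*" := (Num.conj z).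

Definition qform (A : 'M[C]_2) (u w : C) : C :=
  u^* * (A 0 0 * u + A 0 1 * w) + w^* * (A 1 0 * u + A 1 1 * w).

Lemma qformE (A : 'M[C]_2) (v : 'cV[C]_2) :
  (adj v *m A *m v) 0 0 = qform A (v 0 0) (v 1 0).
Proof. by rewrite !mulmx2E !mxE /qform; ring. Qed.

Lemma psd_qform_ge0 (A : 'M[C]_2) : psd A -> forall u w : C, 0 <= qform A u w.
Proof.
move=> [_ psdA] u w; have := psdA (\col_i (if i == 0 then u else w)).
by rewrite qformE !mxE.
Qed.

Lemma psd_conj_entry (A : 'M[C]_2) i j : psd A -> (A i j)^* = A j i.
Proof. by move=> [HA _]; rewrite [in RHS]HA !mxE. Qed.

Lemma psd_diag_ge0 (A : 'M[C]_2) : psd A -> 0 <= A 0 0 /\ 0 <= A 1 1.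
Proof.
move=> psdA; have := psd_qform_ge0 psdA 1 0; have := psd_qform_ge0 psdA 0 1.
by rewrite /qform conjC1 conjC0 !(mulr0, mulr1, mul1r, mul0r, addr0, add0r).
Qed.

(* [tr rho *: rho = u u^* + w w^* + det rho *: 1] for the columns [u], [w] of [rho]. *)
Lemma density_tr_mul_ge0 (M rho : 'M[C]_2) :
  psd M -> density rho -> 0 <= \tr (M *m rho).
Proof.
move=> psdM [psdr trr]; rewrite mxtrace2 in trr.
have [M00 M11] := psd_diag_ge0 psdM.
have r10 : rho 1 0 = (rho 0 1)^* by rewrite psd_conj_entry.
have r00 : (rho 0 0)^* = rho 0 0 by rewrite psd_conj_entry.
have r11 : (rho 1 1)^* = rho 1 1 by rewrite psd_conj_entry.
pose det := rho 0 0 * rho 1 1 - rho 0 1 * (rho 0 1)^*.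
have det_ge0 : 0 <= det.
  have -> : det = qform rho (- rho 0 1) (rho 0 0) + qform rho (rho 1 1) (- rho 1 0).
    rewrite -[det]mul1r -trr /qform /det r10 !rmorphN /= conjCK r00 r11; ring.
  by rewrite addr_ge0 ?psd_qform_ge0.
have -> : \tr (M *m rho) = qform M (rho 0 0) (rho 1 0) + qform M (rho 0 1) (rho 1 1)
                          + det * (M 0 0 + M 1 1).
  rewrite -[LHS]mul1r -trr mxtrace2 !mulmx2E /qform /det r10 r00 r11 conjCK; ring.
apply: addr_ge0; first by apply: addr_ge0; apply: psd_qform_ge0.
exact: mulr_ge0 det_ge0 (addr_ge0 M00 M11).
Qed.

Lemma unsteerable_local_behaviour (B X Cc Z : finType)
    (sigma : B -> X -> 'M[C]_2) (M : Cc -> Z -> 'M[C]_2) :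
  unsteerable sigma -> POVM M ->
  exists P : B -> Cc -> X -> Z -> R,
    (forall b c x z, rc (P b c x z) = \tr (M c z *m sigma b x)) /\ LHV P.
Proof.
move=> [n [Pl [Pb [rho [Pl_dist [Pb_dist [rho_density sigmaE]]]]]]].
move=> [M_psd M_sum].
pose Pc l z c := complex.Re (\tr (M c z *m rho l)).
have tr_ge0 l z c : 0 <= \tr (M c z *m rho l) by exact: density_tr_mul_ge0.
have PcE l z c : (Pc l z c)%:C%C = \tr (M c z *m rho l).
  by rewrite /Pc RRe_real // ger0_real.
exists (fun b c x z => \sum_(l < n) Pl l * Pb l x b * Pc l z c); split.
  move=> b c x z; rewrite sigmaE mulmx_sumr linear_sum /= /rc rmorph_sum.
  apply: eq_bigr => l _; rewrite -scalemxAr linearZ /= rmorphM.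
  by congr (_ * _); exact: PcE.
exists n, Pl, Pb, Pc; do 2!split => //; split => // l z; split.
  by move=> c; rewrite -ler0c; have := tr_ge0 l z c; rewrite -PcE.
suff : (\sum_c Pc l z c)%:C%C = 1 :> C by move/(congr1 (@complex.Re R)).
rewrite rmorph_sum /=.
under eq_bigr do rewrite PcE.
by rewrite -linear_sum -mulmx_suml M_sum mul1mx; case: (rho_density l) => _ <-.
Qed.

Lemma bell_nonlocal_steerable (B X : finType) (sigma : B -> X -> 'M[C]_2) :
  bell_nonlocal sigma -> steerable sigma.
Proof.
move=> [k [m [M [povmM nonlocal]]]] /unsteerable_local_behaviour.
by move=> /(_ _ _ M povmM) [P [PE localP]]; exact: nonlocal PE localP.
Qed.

Lemma conj_rc (r : R) : (rc r)^* = rc r.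
Proof. by rewrite conj_Creal // /rc complex_real. Qed.

Definition pauli_mx (t z x : R) : 'M[C]_2 :=
  \matrix_(i, j) rc (if i == j then (if i == 0 then t + z else t - z) else x).

Lemma pauli_mxE (c d e : R) :
  rc c *: (1%:M + rc d *: (pauliZ R + rc e *: pauliX R)) =
  pauli_mx c (c * d) (c * d * e).
Proof.
apply/matrixP => i j; rewrite !mxE.
by case: i => [[|[|//]] ?]; case: j => [[|[|//]] ?] /=;
  rewrite /rc ?(rmorphD, rmorphN, rmorphM, rmorph0, rmorph1) /=; ring.
Qed.

Lemma sum_pauli_mx n (t z x : 'I_n -> R) :
  \sum_l pauli_mx (t l) (z l) (x l) =
  pauli_mx (\sum_l t l) (\sum_l z l) (\sum_l x l).
Proof.
apply/matrixP => i j; rewrite summxE !mxE.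
under eq_bigr do rewrite mxE.
rewrite /rc -rmorph_sum; congr (_%:C)%C.
by case: (i == j); case: (i == 0); rewrite -?big_split ?sumrB.
Qed.

Lemma scale_pauli_mx (c t z x : R) :
  rc c *: pauli_mx t z x = pauli_mx (c * t) (c * z) (c * x).
Proof.
apply/matrixP => i j; rewrite !mxE /rc -rmorphM; congr (_%:C)%C.
by case: (i == j); case: (i == 0); ring.
Qed.

Lemma tr_pauli_mx (t z x : R) : \tr (pauli_mx t z x) = rc (t *+ 2).
Proof. by rewrite mxtrace2 !mxE /= /rc -rmorphD; congr (_%:C)%C; ring. Qed.

Lemma tr_mul_pauli_mx (t z x t' z' x' : R) :
  \tr (pauli_mx t z x *m pauli_mx t' z' x') = rc (2 * (t * t' + z * z' + x * x')).
Proof.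
rewrite mxtrace2 !mulmx2E !mxE /= /rc -!rmorphM -!rmorphD; congr (_%:C)%C; ring.
Qed.

Lemma psd_pauli_mx (t z x : R) :
  0 <= t -> z ^+ 2 + x ^+ 2 <= t ^+ 2 -> psd (pauli_mx t z x).
Proof.
move=> t_ge0 zx_le; split.
  apply/matrixP => i j; rewrite !mxE conj_rc.
  by case: i => [[|[|//]] ?]; case: j => [[|[|//]] ?].
move=> v; rewrite qformE /qform !mxE /=.
set a := v 0 0; set b := v 1 0.
have [t0|t_gt0] := eqVneq t 0.
  have [-> ->] : z = 0 /\ x = 0 by move: zx_le; rewrite t0; nra.
  by rewrite t0 subrr addr0 /rc rmorph0 !(mul0r, add0r, mulr0).
pose w1 := rc (t + z) * a + rc x * b; pose w2 := rc x * a + rc (t - z) * b.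
have key : rc (2 * t) * (a^* * (rc (t + z) * a + rc x * b) +
                         b^* * (rc x * a + rc (t - z) * b)) =
  w1 * w1^* + w2 * w2^* + rc (t ^+ 2 - z ^+ 2 - x ^+ 2) * (a * a^* + b * b^*).
  rewrite /w1 /w2 !(rmorphD, rmorphM) /= !conj_rc.
  by rewrite /rc !(rmorphD, rmorphB, rmorphM, rmorphXn) /=; ring.
rewrite -(pmulr_rge0 _ (_ : 0 < rc (2 * t))); last by rewrite ltcR; nra.
rewrite key !addr_ge0 ?mul_conjC_ge0 // mulr_ge0 ?addr_ge0 ?mul_conjC_ge0 //.
by rewrite ler0c; lra.
Qed.

Lemma density_pauli_mx (z x : R) :
  z ^+ 2 + x ^+ 2 <= 1 / 4 -> density (pauli_mx (1 / 2) z x).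
Proof.
move=> zx_le; split; first by apply: psd_pauli_mx; lra.
by rewrite tr_pauli_mx /rc -(rmorph1 (real_complex R)); congr (_%:C)%C; lra.
Qed.

End QubitOperators.

Section CHSH.
Variable R : realType.
Local Notation behaviour := ('I_2 -> 'I_2 -> 'I_2 -> 'I_2 -> R).

Definition correlator (Q : behaviour) (x z : 'I_2) : R :=
  Q 0 0 x z - Q 0 1 x z - Q 1 0 x z + Q 1 1 x z.

Definition chsh (Q : behaviour) : R :=
  correlator Q 0 0 + correlator Q 0 1 + correlator Q 1 0 - correlator Q 1 1.

Lemma chsh_deterministic_le2 (a0 a1 b0 b1 : R) :
  `|a0| <= 1 -> `|a1| <= 1 -> `|b0| <= 1 -> `|b1| <= 1 ->
  a0 * b0 + a0 * b1 + a1 * b0 - a1 * b1 <= 2.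
Proof.
rewrite !ler_norml => /andP[? ?] /andP[? ?] /andP[? ?] /andP[? ?].
by have [?|?] := lerP 0 (b0 + b1); have [?|?] := lerP 0 (b0 - b1); nra.
Qed.

Lemma prob_dist2_bias (p : 'I_2 -> R) : prob_dist p -> `|p 0 - p 1| <= 1.
Proof.
move=> [p_ge0]; rewrite big_ord2 ler_norml => p_sum.
by have := p_ge0 0; have := p_ge0 1; lra.
Qed.

Lemma LHV_chsh_le2 (Q : behaviour) : LHV Q -> chsh Q <= 2.
Proof.
move=> [n [Pl [Pb [Pc [[Pl_ge0 Pl_sum] [Pb_dist [Pc_dist QE]]]]]]].
pose a l x := Pb l x 0 - Pb l x 1; pose b l z := Pc l z 0 - Pc l z 1.
have -> : chsh Q =
    \sum_l Pl l * (a l 0 * b l 0 + a l 0 * b l 1 + a l 1 * b l 0 - a l 1 * b l 1).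
  rewrite /chsh /correlator !QE -!(sumrB, big_split) /=.
  by apply: eq_bigr => l _; rewrite /a /b; ring.
apply: (@le_trans _ _ (\sum_l Pl l * 2)); last by rewrite -mulr_suml Pl_sum mul1r.
apply: ler_sum => l _; apply: ler_wpM2l => //.
apply: chsh_deterministic_le2; exact: prob_dist2_bias.
Qed.

End CHSH.

Section GHZ.
Variable R : realType.
Local Notation C := R[i].
Local Notation s2 := (Num.sqrt (2 : R)).

Lemma sqrt2_sqr : s2 ^+ 2 = 2.
Proof. by rewrite sqr_sqrtr // ler0n. Qed.

Lemma sqrt2_gt0 : 0 < s2.
Proof. by rewrite sqrtr_gt0 ltr0n. Qed.

Lemma sqrt2_neq0 : s2 != 0.
Proof. by rewrite gt_eqF ?sqrt2_gt0. Qed.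

Lemma invr_sqrt2 : s2^-1 = s2 / 2.
Proof.
apply: (mulfI sqrt2_neq0); rewrite mulfV ?sqrt2_neq0 // mulrA -expr2 sqrt2_sqr.
by rewrite divff // pnatr_eq0.
Qed.

(* The hidden variable [l] carries the two bits [β = odd l] and
   [γ = odd (l %/ 2)]. *)
Definition lhs_state (l : 'I_4) : 'M[C]_2 :=
  pauli_mx (1 / 2) ((-1) ^+ odd l / (2 * s2)) ((-1) ^+ odd (l %/ 2) / (2 * s2)).

Definition lhs_response (l : 'I_4) (x y : 'I_2) (ab : 'I_2 * 'I_2) : R :=
  if x == 0 then (if (ab.2 : nat) == odd l then 1 / 2 else 0)
  else if ((ab.2 : nat) == odd l) && (odd (ab.1 + y + ab.2) == odd (l %/ 2))
  then 1 else 0.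

Lemma density_lhs_state l : density (lhs_state l).
Proof.
apply: density_pauli_mx.
by rewrite !expr_div_n !exprMn !sqrr_sign sqrt2_sqr; lra.
Qed.

Lemma sigmaGHZ_LHS : LHS_AB_C (@sigmaGHZ R).
Proof.
exists 4%N, (fun _ => 1 / 4), lhs_response, lhs_state; split.
  by split=> [_|]; rewrite ?big_ord_recl ?big_ord0 /=; lra.
split.
  move=> l x y; split.
    by case=> a b; rewrite /lhs_response; do 2!case: ifP => _; lra.
  rewrite -(pair_bigA _ (fun a b => lhs_response l x y (a, b))) /= !big_ord2.
  rewrite /lhs_response.
  by case: l => [[|[|[|[|//]]]] ?]; case: x => [[|[|//]] ?];
     case: y => [[|[|//]] ?] /=; lra.
split; first exact: density_lhs_state.
move=> a b x y; rewrite /sigmaGHZ pauli_mxE.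
under eq_bigr do rewrite scale_pauli_mx.
rewrite sum_pauli_mx !big_ord_recl !big_ord0 /lhs_response /lhs_state /=.
have s2_neq0 := sqrt2_neq0.
by case: a => [[|[|//]] ?]; case: b => [[|[|//]] ?];
   case: x => [[|[|//]] ?]; case: y => [[|[|//]] ?] /=; congr pauli_mx; field.
Qed.

Lemma wiredE (b x : 'I_2) : wired R b x =
  rc (1 / 4) *: (1%:M + rc ((-1) ^+ b / s2) *: (pauliZ R + rc (x : nat)%:R *: pauliX R)).
Proof.
rewrite /wired; under eq_bigr do rewrite /sigmaGHZ pauli_mxE.
rewrite sum_pauli_mx pauli_mxE !big_ord2.
have s2_neq0 := sqrt2_neq0.
by case: b => [[|[|//]] ?]; case: x => [[|[|//]] ?] /=; congr pauli_mx; field.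
Qed.

Lemma pauli_mx1 : pauli_mx 1 0 0 = 1 :> 'M[C]_2.
Proof.
apply/matrixP => i j; rewrite !mxE addr0 subr0.
by case: i => [[|[|//]] ?]; case: j => [[|[|//]] ?].
Qed.

(* Measurements of [Z] (for [z = 0]) and of [-X] (for [z = 1]). *)
Definition charlie_povm (c z : 'I_2) : 'M[C]_2 :=
  pauli_mx (1 / 2) (if z == 0 then (-1) ^+ c / 2 else 0)
                   (if z == 0 then 0 else - ((-1) ^+ c / 2)).

Lemma POVM_charlie_povm : POVM charlie_povm.
Proof.
split=> [c z|z].
  apply: psd_pauli_mx; first lra.
  by case: c => [[|[|//]] ?]; case: z => [[|[|//]] ?] /=; lra.
rewrite /charlie_povm sum_pauli_mx !big_ord2 -pauli_mx1.
by case: z => [[|[|//]] ?] /=; congr pauli_mx; lra.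
Qed.

Lemma tr_charlie_wired (b c x z : 'I_2) :
  \tr (charlie_povm c z *m wired R b x) =
  rc ((1 + (-1) ^+ b * (-1) ^+ c * (if z == 0 then 1 else - (x : nat)%:R) / s2) / 4).
Proof.
rewrite wiredE pauli_mxE /charlie_povm tr_mul_pauli_mx; congr rc.
have s2_neq0 := sqrt2_neq0.
by case: (z == 0); field.
Qed.

Lemma wired_chsh (P : 'I_2 -> 'I_2 -> 'I_2 -> 'I_2 -> R) :
  (forall b c x z, rc (P b c x z) = \tr (charlie_povm c z *m wired R b x)) ->
  chsh P = 3 * s2 / 2.
Proof.
move=> PE.
have {}PE b c x z : P b c x z =
    (1 + (-1) ^+ b * (-1) ^+ c * (if z == 0 then 1 else - (x : nat)%:R) / s2) / 4.
  by apply: complexI; rewrite [LHS]PE tr_charlie_wired.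
rewrite /chsh /correlator !PE /= (_ : (1 %% 2 = 1)%N) // expr0 expr1 invr_sqrt2.
lra.
Qed.

Lemma wired_bell_nonlocal : bell_nonlocal (@wired R).
Proof.
exists 2%N, 2%N, charlie_povm; split; first exact: POVM_charlie_povm.
move=> P PE /LHV_chsh_le2; rewrite (wired_chsh PE).
by have := sqrt2_sqr; have := sqrt2_gt0; nra.
Qed.

End GHZ.

Theorem theorem2 (R : realType) :
  LHS_AB_C (@sigmaGHZ R) /\
  (forall b x : 'I_2, wired R b x =
     rc (1 / 4) *: (1%:M + rc ((-1) ^+ b / Num.sqrt 2) *:
        (pauliZ R + rc (x : nat)%:R *: pauliX R))) /\
  steerable (@wired R) /\
  bell_nonlocal (@wired R).
Proof.
have nonlocal := wired_bell_nonlocal R.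
split; first exact: sigmaGHZ_LHS.
split; first exact: wiredE.
by split; first exact: bell_nonlocal_steerable.
Qed.
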